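(* $\mathbf{Ex}\equiv^{\mathrm{fin}}_{\mathrm{Learn}}\mathbf{PL}$ and $\mathbf{Ex}<_{\mathrm{Learn}}\mathbf{PL}$: a finite family of structures is $\mathbf{Ex}$-learnable iff it is $\mathbf{PL}$-learnable; every $\mathbf{Ex}$-learnable family is $\mathbf{PL}$-learnable, and some $\mathbf{PL}$-learnable family is not $\mathbf{Ex}$-learnable.
   Context: All structures are countable, have domain $\mathbb{N}$, are in a finite relational signature, and are identified with their atomic diagrams. A family of structures $\mathfrak{K}$ is a countable set of pairwise nonisomorphic such structures; $\mathcal{S}\restriction_s$ is the finite substructure on $\{0,\dots,s\}$; $\mathrm{LD}(\mathfrak{K})$ is the set of structures with domain $\mathbb{N}$ isomorphic to a member of $\mathfrak{K}$. A learner is an arbitrary function from $\{\mathcal{S}\restriction_s:\mathcal{S}\in\mathrm{LD}(\mathfrak{K})\}$ to $\{\ulcorner\mathcal{A}\urcorner:\mathcal{A}\in\mathfrak{K}\}\cup\{?\}$ (distinct formal symbols). $\mathfrak{K}$ is $\mathbf{Ex}$-learnable if some learner $\mathbf{M}$ satisfies: for every $\mathcal{S}\in\mathrm{LD}(\mathfrak{K})$, $\mathbf{M}(\mathcal{S}\restriction_n)$ is eventually constantly $\ulcorner\mathcal{A}\urcorner$ where $\mathcal{A}\in\mathfrak{K}$, $\mathcal{A}\cong\mathcal{S}$. $\mathfrak{K}$ is $\mathbf{PL}$-learnable if some learner $\mathbf{M}$ satisfies: for every $\mathcal{S}\in\mathrm{LD}(\mathfrak{K})$ and $\mathcal{A}\in\mathfrak{K}$,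 $\{n:\mathbf{M}(\mathcal{S}\restriction_n)=\ulcorner\mathcal{A}\urcorner\}$ is infinite iff $\mathcal{A}\cong\mathcal{S}$. For criteria $X,Y$: $X\leq_{\mathrm{Learn}}Y$ iff every $X$-learnable family is $Y$-learnable; $\leq^{\mathrm{fin}}_{\mathrm{Learn}}$ is the same restricted to finite families; $<$ means $\leq$ but not $\geq$; $\equiv$ means both. *)

From mathcomp Require Import all_boot.
Set Implicit Arguments. Unset Strict Implicit. Unset Printing Implicit Defensive.

(* A finite relational signature: the list of arities of its relation symbols. *)
Definition signature := seq nat.

(* A structure with domain nat, identified with its atomic diagram:
   for each relation symbol i, the characteristic function of R_i on tuples. *)
Definition structure (sig : signature) :=
  forall i : 'I_(size sig), (nth 0 sig i).-tuple nat -> bool.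

Definition fstructure (sig : signature) (s : nat) :=
  forall i : 'I_(size sig), (nth 0 sig i).-tuple 'I_s.+1 -> bool.

Definition restr (sig : signature) (S : structure sig) (s : nat) : fstructure sig s :=
  fun i t => S i (map_tuple (@nat_of_ord s.+1) t).

(* The input of a learner at stage s: the finite structure S|_s. *)
Definition stage (sig : signature) (S : structure sig) (s : nat)
  : {n : nat & fstructure sig n} := existT _ s (@restr sig S s).

Definition iso (sig : signature) (S1 S2 : structure sig) : Prop :=
  exists f : nat -> nat, bijective f /\
    forall (i : 'I_(size sig)) (t : (nth 0 sig i).-tuple nat),
      S1 i t = S2 i (map_tuple f t).

(* A family: a countable indexed set of pairwise nonisomorphic structures.
   The index i serves as the code of K i. *)
Definition family (sig : signature) (I : countType) (K : I -> structure sig) : Prop :=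
  forall i j, iso (K i) (K j) -> i = j.

Definition LD (sig : signature) (I : countType) (K : I -> structure sig)
  (S : structure sig) : Prop := exists i, iso (K i) S.

(* Learners: arbitrary functions from finite structures to codes or ? (None). *)
Definition learner (sig : signature) (I : countType) :=
  {n : nat & fstructure sig n} -> option I.

Definition Ex_learnable (sig : signature) (I : countType) (K : I -> structure sig) : Prop :=
  exists M : learner sig I, forall S, LD K S ->
    exists i, iso (K i) S /\ exists n0, forall n, n0 <= n -> M (stage S n) = Some i.

Definition PL_learnable (sig : signature) (I : countType) (K : I -> structure sig) : Prop :=
  exists M : learner sig I, forall S, LD K S -> forall i,
    (forall m, exists n, m <= n /\ M (stage S n) = Some i) <-> iso (K i) S.

Definition criterion := forall (sig : signature) (I : countType), (I -> structure sig) -> Prop.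

Definition learn_le (X Y : criterion) : Prop :=
  forall sig (I : countType) (K : I -> structure sig), family K -> X sig I K -> Y sig I K.

Definition learn_le_fin (X Y : criterion) : Prop :=
  forall sig (I : finType) (K : I -> structure sig), family K -> X sig I K -> Y sig I K.

Definition learn_lt (X Y : criterion) : Prop := learn_le X Y /\ ~ learn_le Y X.
Definition learn_equiv_fin (X Y : criterion) : Prop := learn_le_fin X Y /\ learn_le_fin Y X.

From Pilot Require Import Defs.
From mathcomp Require Import all_boot.
From Stdlib Require Import Classical FunctionalExtensionality.
Set Implicit Arguments. Unset Strict Implicit.

(* A learner that converges to the right index outputs it infinitely often and
   every other index only finitely often, so Ex-learning is PL-learning.  In a
   finite family each wrong index is output only finitely often, hence after
   some stage every output is correct; repeating the latest conjecture then
   turns a PL-learner into an Ex-learner.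
   The separating family consists of unary structures: P = {x | x < k} for each
   k, and P = odd numbers.  Up to isomorphism, a unary structure is determined by
   the number of elements inside and outside P; so the members are the
   structures with exactly k elements in P, and the one with P infinite and
   coinfinite.  Guessing "infinite" when the current element lies in P and
   "k = #(P restricted to [0, n])" otherwise PL-learns the family.  An
   Ex-learner M is defeated by an infinite coinfinite P that acquires a new
   element each time M gives up the guess "infinite" on the current finite
   approximation of P. *)

Lemma iso_sym sig (S1 S2 : structure sig) : iso S1 S2 -> iso S2 S1.
Proof.
case=> f [[g fK gK] S12]; exists g; split; first by exists f.
move=> i t; rewrite S12; congr (S2 i _); apply: val_inj => /=.
by rewrite -map_comp (eq_map gK) map_id.
Qed.

Lemma iso_trans sig (S1 S2 S3 : structure sig) : iso S1 S2 -> iso S2 S3 -> iso S1 S3.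
Proof.
case=> f [bij_f S12] [g [bij_g S23]]; exists (g \o f); split; first exact: bij_comp.
by move=> i t; rewrite S12 S23; congr (S3 i _); apply: val_inj; rewrite /= map_comp.
Qed.

Lemma family_iso_eq sig (I : countType) (K : I -> structure sig) S i j :
  Defs.family K -> iso (K i) S -> iso (K j) S -> i = j.
Proof. by move=> famK iS jS; apply: famK; apply: iso_trans iS (iso_sym jS). Qed.

Definition infinitely_often (P : nat -> Prop) := forall m, exists n, m <= n /\ P n.

Lemma infinitely_often_eventually_const (T : Type) (h : nat -> T) n0 x y :
  (forall n, n0 <= n -> h n = x) -> infinitely_often (fun n => h n = y) <-> y = x.
Proof.
move=> hx; split=> [/(_ n0) [n [n0n <-]] | -> m]; first exact: hx.
by exists (maxn m n0); rewrite leq_maxl hx // leq_maxr.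
Qed.

Lemma not_infinitely_often (P : nat -> Prop) :
  ~ infinitely_often P -> exists n0, forall n, n0 <= n -> ~ P n.
Proof. by move/not_all_ex_not=> [n0 notP]; exists n0 => n n0n Pn; apply: notP; exists n. Qed.

Lemma eventually_all (T : eqType) (s : seq T) (P : T -> nat -> Prop) :
  (forall x, x \in s -> exists n0, forall n, n0 <= n -> P x n) ->
  exists n0, forall x n, x \in s -> n0 <= n -> P x n.
Proof.
elim: s => [|x s IHs] evP; first by exists 0.
have [n1 P1] := evP x (mem_head x s).
have [n2 P2] := IHs (fun y ys => evP y (predU1r _ _ ys)).
exists (maxn n1 n2) => y n; rewrite inE => /orP[/eqP-> | ys] le_n.
  exact/P1/(leq_trans (leq_maxl _ _) le_n).
exact/P2/(leq_trans (leq_maxr _ _) le_n).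
Qed.

Lemma Ex_le_PL : learn_le Ex_learnable PL_learnable.
Proof.
move=> sig I K famK [M MEx]; exists M => S /[dup] SK /MEx [i0 [i0S [n0 Mn0]]] i.
apply: (iff_trans (infinitely_often_eventually_const (Some i) Mn0)).
by split=> [[->] // | iS]; rewrite (family_iso_eq famK iS i0S).
Qed.

Definition fsub sig n (s : fstructure sig n) m : fstructure sig m :=
  fun i t => s i (map_tuple (fun x : 'I_m.+1 => inord x : 'I_n.+1) t).
Arguments fsub [sig n] s m.

Lemma fsub_restr sig (S : structure sig) n m : m <= n ->
  existT _ m (fsub (@restr _ S n) m) = stage S m.
Proof.
move=> le_mn; congr existT.
apply: functional_extensionality_dep => i; apply: functional_extensionality => t.
congr (S i _); apply: val_inj; rewrite /= -map_comp; apply/eq_in_map => x _ /=.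
by rewrite inordK // (leq_trans (ltn_ord x)).
Qed.

Fixpoint last_guess (T : Type) (h : nat -> option T) n : option T :=
  match n with
  | 0 => h 0
  | n'.+1 => if h n'.+1 is Some x then Some x else last_guess h n'
  end.

Lemma eq_last_guess (T : Type) (h h' : nat -> option T) n :
  (forall m, m <= n -> h m = h' m) -> last_guess h n = last_guess h' n.
Proof.
elim: n => [|n IHn] eq_h /=; first exact: eq_h.
by rewrite eq_h // IHn // => m le_mn; apply: eq_h; apply: leq_trans le_mn _.
Qed.

Lemma last_guess_stable (T : Type) (h : nat -> option T) x n1 :
  h n1 = Some x -> (forall n y, n1 <= n -> h n = Some y -> y = x) ->
  forall n, n1 <= n -> last_guess h n = Some x.
Proof.
move=> hn1 h_x; elim=> [|n IHn]; first by rewrite leqn0 => /eqP n1_0; rewrite -hn1 n1_0.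
rewrite leq_eqVlt => /orP[/eqP n1_n | lt_n1n] /=; first by rewrite -n1_n hn1.
case hn: (h n.+1) => [y|]; last exact: IHn.
by rewrite (h_x _ _ (ltnW lt_n1n) hn).
Qed.

Lemma PL_le_Ex : learn_le_fin PL_learnable Ex_learnable.
Proof.
move=> sig I K famK [M MPL].
exists (fun s => last_guess (fun m => M (existT _ m (fsub (projT2 s) m))) (projT1 s)).
move=> S SK; have [i0 i0S] := SK; exists i0; split=> //.
have wrong_absent j : j \in enum I ->
    exists n0, forall n, n0 <= n -> j != i0 -> M (stage S n) != Some j.
  move=> _; case: (eqVneq j i0) => [-> | ne_j]; first by exists 0.
  have : ~ infinitely_often (fun n => M (stage S n) = Some j).
    by move/(MPL S SK j)/(family_iso_eq famK i0S)=> eq_j; rewrite eq_j eqxx in ne_j.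
  by case/not_infinitely_often=> n0 absent; exists n0 => n le_n _; apply/eqP/absent.
have [N wrong_absent_N] := eventually_all wrong_absent.
have [n1 [le_Nn1 Mn1]] := proj2 (MPL S SK i0) i0S N.
exists n1 => n le_n1n /=.
rewrite (eq_last_guess (h' := fun m => M (stage S m))) => [|m le_mn]; last first.
  by rewrite fsub_restr.
apply: (last_guess_stable (h := fun m => M (stage S m)) Mn1) => // m j le_n1m Mm.
apply/eqP/(contraTT (wrong_absent_N j m (mem_enum _ _) (leq_trans le_Nn1 le_n1m))).
by rewrite Mm.
Qed.

Definition cnt (q : pred nat) x := count q (iota 0 x).

Lemma cntS (q : pred nat) x : cnt q x.+1 = cnt q x + q x.
Proof. by rewrite /cnt -addn1 iotaD count_cat /= addn0. Qed.

Lemma eq_cnt (q q' : pred nat) : q =1 q' -> cnt q =1 cnt q'.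
Proof. by move=> eq_q x; apply: eq_count. Qed.

Lemma cnt_eqb_true (q : pred nat) : cnt (fun y => q y == true) =1 cnt q.
Proof. by apply: eq_cnt => y; apply: eqb_id. Qed.

Lemma cnt_mono (q : pred nat) : {homo cnt q : x y / x <= y}.
Proof. by move=> x y le_xy; rewrite /cnt -(subnKC le_xy) iotaD count_cat leq_addr. Qed.

Lemma cnt_lt (q : pred nat) x y : q x -> x < y -> cnt q x < cnt q y.
Proof. by move=> qx /(cnt_mono q); rewrite cntS qx addn1. Qed.

Lemma cnt_inj (q : pred nat) x y : q x -> q y -> cnt q x = cnt q y -> x = y.
Proof.
move=> qx qy eq_cnt_xy; case: (ltngtP x y) => // lt.
  by have := cnt_lt qx lt; rewrite eq_cnt_xy ltnn.
by have := cnt_lt qy lt; rewrite eq_cnt_xy ltnn.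
Qed.

Lemma cnt_const (q : pred nat) N n :
  (forall x, N <= x -> ~~ q x) -> N <= n -> cnt q n = cnt q N.
Proof.
move=> q_bound le_Nn; rewrite /cnt -(subnKC le_Nn) iotaD count_cat -[RHS]addn0.
congr (_ + _); apply/eqP; rewrite eqn0Ngt -has_count; apply/hasPn => x.
by rewrite mem_iota add0n => /andP[/q_bound].
Qed.

Lemma cnt_ltn c : cnt (fun x => x < c) c = c.
Proof.
rewrite /cnt (@eq_in_count _ _ predT) ?count_predT ?size_iota // => x.
by rewrite mem_iota.
Qed.

Lemma cnt_hit (q : pred nat) j m : j < cnt q m -> exists2 x, q x & cnt q x = j.
Proof.
elim: m => [|m IHm] //; rewrite cntS.
case: (ltnP j (cnt q m)) => [/IHm // | le_j].
case qm: (q m); last by rewrite addn0 ltnNge le_j.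
by rewrite addn1 ltnS => ge_j; exists m => //; apply/eqP; rewrite eqn_leq ge_j le_j.
Qed.

Lemma cnt_unbounded (q : pred nat) :
  infinitely_often (fun x => q x) -> forall j, exists m, j < cnt q m.
Proof.
move=> q_inf; elim=> [|j [m lt_jm]].
  by have [x [_ qx]] := q_inf 0; exists x.+1; rewrite cntS qx addn1.
have [x [le_mx qx]] := q_inf m; exists x.+1; rewrite cntS qx addn1 ltnS.
exact: leq_trans lt_jm (cnt_mono q le_mx).
Qed.

Lemma nat_inj_surj_bij (f : nat -> nat) :
  injective f -> (forall y, exists x, f x == y) -> bijective f.
Proof.
move=> inj_f surj_f; exists (fun y => ex_minn (surj_f y)).
  by move=> x; case: ex_minnP => z /eqP /inj_f.
by move=> y; case: ex_minnP => z /eqP.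
Qed.

Lemma leq_of_inj_bounded (h : nat -> nat) a b :
  injective h -> (forall x, x < a -> h x < b) -> a <= b.
Proof.
move=> inj_h h_bound; pose h' (x : 'I_a) : 'I_b := Ordinal (h_bound x (ltn_ord x)).
have inj_h' : injective h' by move=> x y [] /inj_h /val_inj.
by have := leq_card h' inj_h'; rewrite !card_ord.
Qed.

Lemma inj_unbounded (h : nat -> nat) : injective h -> forall m, exists j, m <= h j.
Proof.
move=> inj_h m; apply: NNPP => /not_ex_all_not small.
have : m.+1 <= m; last by rewrite ltnn.
apply: (leq_of_inj_bounded inj_h) => x _; rewrite ltnNge; apply/negP; exact: small.
Qed.

Definition sig_unary : signature := [:: 1].

Definition ustruct (p : pred nat) : structure sig_unary := fun _ t => p (nth 0 t 0).

Definition upred (S : structure sig_unary) : pred nat := fun x => S ord0 [tuple x].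

Lemma upredK : cancel upred ustruct.
Proof.
move=> S; apply: functional_extensionality_dep => i; apply: functional_extensionality => t.
rewrite /ustruct /upred; move: t; rewrite (ord1 i) => t.
by congr (S _ _); apply: val_inj; case: t => [[|x []]].
Qed.

Lemma iso_ustructP p p' :
  iso (ustruct p) (ustruct p') <-> exists2 f, bijective f & forall x, p x = p' (f x).
Proof.
split=> [[f [bij_f pf]] | [f bij_f pf]].
  by exists f => // x; have := pf ord0 [tuple x].
exists f; split=> // i t; rewrite /ustruct pf /= (nth_map 0) //.
by rewrite size_tuple (ord1 i).
Qed.

Definition rank (p : pred nat) x := cnt (fun y => p y == p x) x.

Lemma rankE p x b : p x = b -> rank p x = cnt (fun y => p y == b) x.
Proof. by rewrite /rank => ->. Qed.

Lemma rank_inj p x y : p x = p y -> rank p x = rank p y -> x = y.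
Proof.
move=> pxy; rewrite (rankE pxy) (rankE (erefl (p y))).
by apply: cnt_inj; rewrite /= ?pxy.
Qed.

Definition has_rank (p : pred nat) (b : bool) (j : nat) := exists2 x, p x = b & rank p x = j.

Lemma iso_ustruct_rank p p' :
  (forall b j, has_rank p b j <-> has_rank p' b j) -> iso (ustruct p) (ustruct p').
Proof.
move=> same_ranks; apply/iso_ustructP.
have image x : exists y, (p' y == p x) && (rank p' y == rank p x).
  have [|y p'y r'y] := (same_ranks (p x) (rank p x)).1; first by exists x.
  by exists y; rewrite p'y r'y !eqxx.
pose f x := ex_minn (image x).
have fP x : p' (f x) = p x /\ rank p' (f x) = rank p x.
  by rewrite /f; case: ex_minnP => y /andP[/eqP-> /eqP->].
exists f => [|x]; last by rewrite (fP x).1.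
apply: nat_inj_surj_bij => [x x' fxx' | y].
  apply: (@rank_inj p); first by rewrite -(fP x).1 -(fP x').1 fxx'.
  by rewrite -(fP x).2 -(fP x').2 fxx'.
have [|x px rx] := (same_ranks (p' y) (rank p' y)).2; first by exists y.
by exists x; apply/eqP/(@rank_inj p'); rewrite ?(fP x).1 ?(fP x).2.
Qed.

Lemma has_rank_inf p b : infinitely_often (fun x => p x = b) -> forall j, has_rank p b j.
Proof.
move=> b_inf j.
have [|m lt_jm] := @cnt_unbounded (fun y => p y == b) _ j.
  by move=> m; have [x [le_mx pxb]] := b_inf m; exists x; rewrite pxb eqxx.
by have [x /eqP pxb rx] := cnt_hit lt_jm; exists x; rewrite ?(rankE pxb).
Qed.

Lemma has_rank_fin p b N : (forall x, N <= x -> p x != b) ->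
  forall j, has_rank p b j <-> j < cnt (fun y => p y == b) N.
Proof.
move=> b_bound j; split=> [[x pxb <-] | /cnt_hit [x /eqP pxb rx]].
  rewrite (rankE pxb); apply: cnt_lt; first by rewrite /= pxb.
  by rewrite ltnNge; apply/negP => /b_bound; rewrite pxb eqxx.
by exists x; rewrite ?(rankE pxb).
Qed.

Definition kpred (o : option nat) : pred nat :=
  if o is Some k then fun x => x < k else odd.

Definition K (o : option nat) : structure sig_unary := ustruct (kpred o).

Lemma iso_K_Some_bounded (p : pred nat) N :
  (forall x, N <= x -> ~~ p x) -> iso (K (Some (cnt p N))) (ustruct p).
Proof.
move=> p_bound; apply: iso_ustruct_rank => -[] j.
  rewrite (has_rank_fin (N := cnt p N)) => [|x]; last by rewrite /= ltnNge => ->.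
  rewrite (has_rank_fin (N := N)) => [|x /p_bound]; last by rewrite eqb_id.
  by rewrite !cnt_eqb_true cnt_ltn.
split=> _; apply: has_rank_inf => m.
  by exists (maxn m N); rewrite leq_maxl (negbTE (p_bound _ (leq_maxr _ _))).
by exists (m + cnt p N); rewrite leq_addr /= ltnNge leq_addl.
Qed.

Lemma iso_K_None_inf (p : pred nat) : infinitely_often (fun x => p x) ->
  infinitely_often (fun x => ~~ p x) -> iso (K None) (ustruct p).
Proof.
move=> p_inf notp_inf; apply: iso_ustruct_rank => b j.
split=> _; apply: has_rank_inf => m; case: b.
- by have [x [le_mx px]] := p_inf m; exists x.
- by have [x [le_mx npx]] := notp_inf m; exists x; rewrite (negbTE npx).
- by exists m.*2.+1; rewrite /= odd_double -addnn leqW ?leq_addr.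
- by exists m.*2; rewrite /= odd_double -addnn leq_addr.
Qed.

Lemma iso_K_Some_leq k l : iso (K (Some k)) (K (Some l)) -> k <= l.
Proof.
case/iso_ustructP=> f /bij_inj inj_f kf; apply: (leq_of_inj_bounded inj_f) => x.
by have /= -> := kf x.
Qed.

Lemma iso_K_None_Some l : ~ iso (K None) (K (Some l)).
Proof.
case/iso_ustructP=> f /bij_inj inj_f kf.
have : l.+1 <= l; last by rewrite ltnn.
apply: (@leq_of_inj_bounded (fun j => f j.*2.+1)) => [x y /inj_f [/double_inj] //|x _].
by have /= := kf x.*2.+1; rewrite odd_double => <-.
Qed.

Lemma family_K : Defs.family K.
Proof.
move=> [k|] [l|] iso_kl //.
- by congr Some; apply/eqP; rewrite eqn_leq !iso_K_Some_leq //; apply: iso_sym.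
- by case: (iso_K_None_Some (iso_sym iso_kl)).
- by case: (iso_K_None_Some iso_kl).
Qed.

Lemma iso_K_Some_finite k (p : pred nat) : iso (K (Some k)) (ustruct p) ->
  exists2 N, forall x, N <= x -> ~~ p x & cnt p N = k.
Proof.
move=> iso_kp; case/iso_ustructP: (iso_kp) => f [g fK gK] kf.
have [N f_bound] : exists N, forall x, x < k -> f x < N.
  exists (\max_(x < k) f x).+1 => x lt_xk; rewrite ltnS.
  exact: (leq_bigmax (F := fun x : 'I_k => f x) (Ordinal lt_xk)).
have p_bound x : N <= x -> ~~ p x.
  by move=> le_Nx; rewrite -(gK x) -kf; apply/negP => /f_bound; rewrite gK ltnNge le_Nx.
exists N => //.
by have [] := family_iso_eq family_K (iso_K_Some_bounded p_bound) iso_kp.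
Qed.

Lemma iso_K_None_inf_often (p : pred nat) :
  iso (K None) (ustruct p) -> infinitely_often (fun x => p x).
Proof.
case/iso_ustructP=> f /bij_inj inj_f kf m.
have [|j le_m] := @inj_unbounded (fun j => f j.*2.+1) _ m.
  by move=> x y /inj_f [/double_inj].
by exists (f j.*2.+1); rewrite -kf /= odd_double.
Qed.

Definition fpred n (s : fstructure sig_unary n) : pred nat :=
  fun m => s ord0 [tuple inord m].

Definition count_learner : learner sig_unary (option nat) := fun s =>
  let n := projT1 s in let P := fpred (projT2 s) in
  if P n then Some None else Some (Some (count P (iota 0 n.+1))).

Lemma count_learner_stage (p : pred nat) n : count_learner (stage (ustruct p) n) =
  if p n then Some None else Some (Some (cnt p n.+1)).
Proof.
have fpredE m : m <= n -> fpred (@restr _ (ustruct p) n) m = p m.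
  by move=> le_mn; rewrite /fpred /restr /ustruct /= inordK.
rewrite /count_learner /stage; cbn [projT1 projT2].
rewrite fpredE // (@eq_in_count _ _ p) // => m; rewrite mem_iota => /andP[_].
exact: fpredE.
Qed.

Lemma PL_learnable_K : PL_learnable K.
Proof.
exists count_learner => S; rewrite -(upredK S); move: (upred S) => p [i0 i0p] i.
apply: (@iff_trans _ (i = i0)); last first.
  by split=> [-> // | ip]; apply: family_iso_eq family_K ip i0p.
case: i0 i0p => [k | ] i0p.
  have [N p_bound cnt_N] := iso_K_Some_finite i0p.
  have learner_k n : N <= n -> count_learner (stage (ustruct p) n) = Some (Some k).
    move=> le_Nn; rewrite count_learner_stage (negbTE (p_bound _ le_Nn)).
    by rewrite (cnt_const p_bound) ?cnt_N // leqW.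
  apply: (iff_trans (infinitely_often_eventually_const (Some i) learner_k)).
  by split=> [[] | ->].
have p_inf := iso_K_None_inf_often i0p.
case: i => [j|]; last first.
  split=> // _ m; have [n [le_mn pn]] := p_inf m.
  by exists n; rewrite count_learner_stage pn.
split=> // j_inf; have [m lt_jm] := cnt_unbounded p_inf j.
have [n [le_mn]] := j_inf m; rewrite count_learner_stage; case: (p n) => // -[cnt_n].
by have := cnt_mono p (leqW le_mn); rewrite cnt_n leqNgt lt_jm.
Qed.

Lemma stage_ustruct_eq (p p' : pred nat) n :
  (forall x, x <= n -> p x = p' x) -> stage (ustruct p) n = stage (ustruct p') n.
Proof.
move=> eq_p; congr existT.
apply: functional_extensionality_dep => i; apply: functional_extensionality => t.
by rewrite /restr /ustruct eq_p //; case: t => [[|x s] _] //=; rewrite -ltnS.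
Qed.

Section Diagonalization.

Variable M : learner sig_unary (option nat).

Hypothesis M_Ex : forall S, LD K S ->
  exists i, iso (K i) S /\ exists n0, forall n, n0 <= n -> M (stage S n) = Some i.

Definition wpred (w : seq bool) : pred nat := nth false w.

Lemma M_leaves_None w :
  exists n, (size w <= n) && (M (stage (ustruct (wpred w)) n) != Some None).
Proof.
have iso_w : iso (K (Some (cnt (wpred w) (size w)))) (ustruct (wpred w)).
  by apply: iso_K_Some_bounded => x le_wx; rewrite /wpred nth_default.
have [[c|] [iso_i [n0 Mn0]]] := M_Ex (ex_intro (fun i => iso (K i) _) _ iso_w).
  by exists (maxn n0 (size w)); rewrite leq_maxr Mn0 ?leq_maxl.
by have := family_iso_eq family_K iso_i iso_w.
Qed.

Definition escape w := ex_minn (M_leaves_None w).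

Lemma escapeP w :
  size w <= escape w /\ M (stage (ustruct (wpred w)) (escape w)) != Some None.
Proof. by rewrite /escape; case: ex_minnP => n /andP[]. Qed.

Fixpoint diag_word t : seq bool :=
  if t is t'.+1 then
    let w := diag_word t' in w ++ nseq (escape w - size w).+1 false ++ [:: true]
  else [::].

Lemma diag_wordS t : diag_word t.+1 =
  diag_word t ++ nseq (escape (diag_word t) - size (diag_word t)).+1 false ++ [:: true].
Proof. by []. Qed.

Lemma size_diag_word_S t : size (diag_word t.+1) = (escape (diag_word t)).+2.
Proof.
by rewrite diag_wordS !size_cat size_nseq addn1 !addnS subnKC // (escapeP _).1.
Qed.

Lemma size_diag_word t : t <= size (diag_word t).
Proof.
elim: t => // t IHt; rewrite size_diag_word_S ltnS.
exact: leq_trans IHt (leq_trans (escapeP _).1 (leqnSn _)).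
Qed.

Lemma diag_word_prefix t d : exists s, diag_word (t + d) = diag_word t ++ s.
Proof.
elim: d => [|d [s IHd]]; first by exists [::]; rewrite addn0 cats0.
by rewrite addnS diag_wordS IHd; eexists; rewrite -catA.
Qed.

Lemma nth_diag_word t t' x : x < size (diag_word t) -> x < size (diag_word t') ->
  nth false (diag_word t) x = nth false (diag_word t') x.
Proof.
wlog le_tt' : t t' / t <= t'.
  by move=> gen; case: (leqP t t') => [|/ltnW] le x_t x_t'; [|symmetry]; apply: gen.
move=> x_t _; rewrite -(subnKC le_tt'); have [s ->] := diag_word_prefix t (t' - t).
by rewrite nth_cat x_t.
Qed.

Definition diag_pred : pred nat := fun x => nth false (diag_word x.+1) x.

Lemma diag_predE t x : x < size (diag_word t) -> diag_pred x = nth false (diag_word t) x.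
Proof. by apply: nth_diag_word; apply: size_diag_word. Qed.

Lemma diag_pred_agree t x :
  x <= escape (diag_word t) -> diag_pred x = wpred (diag_word t) x.
Proof.
move=> le_x; rewrite (@diag_predE t.+1); last by rewrite size_diag_word_S ltnS leqW.
rewrite diag_wordS /wpred nth_cat; case: ltnP => // le_wx.
rewrite [RHS]nth_default // nth_cat size_nseq ltnS leq_sub2r //.
by rewrite nth_nseq ltnS leq_sub2r.
Qed.

Lemma diag_pred_escape t : ~~ diag_pred (escape (diag_word t)).
Proof. by rewrite (diag_pred_agree (leqnn _)) /wpred nth_default // (escapeP _).1. Qed.

Lemma diag_pred_escapeS t : diag_pred (escape (diag_word t)).+1.
Proof.
have le_w := (escapeP (diag_word t)).1.
rewrite (@diag_predE t.+1) ?size_diag_word_S // diag_wordS nth_cat ltnNge leqW //.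
by rewrite subSn // nth_cat size_nseq ltnn subnn.
Qed.

Lemma no_Ex_learner : False.
Proof.
have escape_late m : m <= escape (diag_word m).
  exact: leq_trans (size_diag_word m) (escapeP _).1.
have iso_diag : iso (K None) (ustruct diag_pred).
  apply: iso_K_None_inf => m.
    by exists (escape (diag_word m)).+1; rewrite leqW ?escape_late ?diag_pred_escapeS.
  by exists (escape (diag_word m)); rewrite escape_late diag_pred_escape.
have [i [iso_i [n0 Mn0]]] := M_Ex (ex_intro (fun i => iso (K i) _) _ iso_diag).
rewrite (family_iso_eq family_K iso_i iso_diag) in Mn0.
have := (escapeP (diag_word n0)).2.
by rewrite -(stage_ustruct_eq (@diag_pred_agree n0)) Mn0 ?escape_late ?eqxx.
Qed.

End Diagonalization.

Lemma not_Ex_learnable_K : ~ Ex_learnable K.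
Proof. by case=> M M_Ex; apply: (no_Ex_learner M_Ex). Qed.

Theorem mainTheorem16 :
  learn_equiv_fin Ex_learnable PL_learnable /\ learn_lt Ex_learnable PL_learnable.
Proof.
split; first split.
- by move=> sig I K; apply: Ex_le_PL.
- exact: PL_le_Ex.
split; first exact: Ex_le_PL.
by move=> PL_le_Ex'; apply: not_Ex_learnable_K; apply: PL_le_Ex' family_K PL_learnable_K.
Qed.
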